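(* Let $\mathcal{M}$ and $\mathcal{M}'$ be ergodic Markov chains on the same finite state space $\Omega$, and let $f$ be an $(\mathcal{M},\mathcal{M}')$-flow such that $\kappa(f)<\infty$. Then there is an $(\mathcal{M},\mathcal{M}')$-flow $f'$ with $A(f')\le 8\,\kappa(f)\,B(f)$.
   Context: A (discrete-time) Markov chain on a finite state space $\Omega$ with transition matrix $P$ is ergodic if irreducible and aperiodic; it then has a unique stationary distribution $\pi>0$. Let $\mathcal{M}$ have transition matrix $P$ and stationary distribution $\pi$, and $\mathcal{M}'$ have transition matrix $P'$ and stationary distribution $\pi'$. Let $E^*(\mathcal{M})=\{(x,y): P(x,y)>0\}$ (pairs not necessarily distinct), similarly $E^*(\mathcal{M}')$. For $(x,y)\in E^*(\mathcal{M}')$, $\mathcal{P}_{x,y}$ is the set of paths $\gamma=(x=x_0,\dots,x_k=y)$ with each $(x_i,x_{i+1})\in E^*(\mathcal{M})$ and each $(z,w)\in E^*(\mathcal{M})$ appearing at most twice as a consecutive pair on $\gamma$; $|\gamma|=k$. $\mathcal{P}=\bigcup_{(x,y)\in E^*(\mathcal{M}')}\mathcal{P}_{x,y}$. An $(\mathcal{M},\mathcal{M}')$-flow is $f:\mathcal{P}\to[0,1]$ with $\sum_{\gamma\in\mathcal{P}_{x,y}}f(\gamma)=\pi'(x)P'(x,y)$ for all $(x,y)\in E^*(\mathcal{M}')$. With $r((z,w),\gamma)$ the number of times $(z,w)$ appears on $\gamma$, the edge congestion is $A_{z,w}(f)=\frac{1}{\pi(z)P(z,w)}\sum_{\gamma:(z,w)\in\gamma}r((z,w),\gamma)|\gamma|f(\gamma)$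 and $A(f)=\max_{(z,w)\in E^*(\mathcal{M})}A_{z,w}(f)$. The state congestion of $z\in\Omega$ is $B_z(f)=\frac{1}{\pi(z)}\sum_{\gamma\in\mathcal{P}: z\in\gamma}|\gamma|f(\gamma)$ (sum over paths visiting $z$), and $B(f)=\max_{z}B_z(f)$. The time-reversal has transition matrix $R(P)(w,x)=\pi(x)P(x,w)/\pi(w)$. Define $\kappa(f)=\max_{(z,w):A_{z,w}(f)>0}\left(\sum_{x\in\Omega}\min\{P(z,x),R(P)(w,x)\}\right)^{-1}$ (with $1/0=\infty$). *)

From HB Require Import structures.
From mathcomp Require Import all_boot all_order all_algebra.
Set Implicit Arguments. Unset Strict Implicit. Unset Printing Implicit Defensive.
Import Order.TTheory GRing.Theory Num.Theory.
Local Open Scope ring_scope.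

Section Markov.
Variables (R : realFieldType) (T : finType).
Implicit Types (P Q : T -> T -> R) (pi : T -> R) (f : seq T -> R).

Definition stochastic P :=
  (forall x y, 0 <= P x y) /\ (forall x, \sum_y P x y = 1).

Fixpoint mpow P (t : nat) : T -> T -> R :=
  match t with
  | 0 => fun x y => (x == y)%:R
  | t'.+1 => fun x y => \sum_z mpow P t' x z * P z y
  end.

Definition irreducible P := forall x y, exists t, 0 < mpow P t x y.

(** gcd {t >= 1 : P^t(x,x) > 0} = 1 for every x: the only common divisor is 1. *)
Definition aperiodic P :=
  forall x (d : nat),
    (forall t, (0 < t)%N -> 0 < mpow P t x x -> (d %| t)%N) -> d = 1%N.

Definition ergodic P := [/\ stochastic P, irreducible P & aperiodic P].

Definition stationary P pi :=
  [/\ forall x, 0 <= pi x, \sum_x pi x = 1 & forall y, \sum_x pi x * P x y = pi y].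

Definition edge P x y : bool := 0 < P x y.

(** A path is its vertex sequence (x_0, ..., x_k); its consecutive pairs: *)
Definition steps (g : seq T) : seq (T * T) := zip g (behead g).
Definition plen (g : seq T) : nat := (size g).-1.
Definition r_occ (e : T * T) (g : seq T) : nat := count_mem e (steps g).

Definition is_path_xy P x y (g : seq T) : bool :=
  [&& g != [::], head x g == x, last x g == y,
      all (fun e => edge P e.1 e.2) (steps g) &
      all (fun e => r_occ e g <= 2)%N (steps g)].

Definition in_Pxy P P' x y (g : seq T) : bool := edge P' x y && is_path_xy P x y g.

Definition in_P P P' (g : seq T) : bool := [exists x, exists y, in_Pxy P P' x y g].

(** Every path in P has at most 2|E*(M)| <= 2|T|^2 edges, hence at most
    maxlen = 2|T|^2+1 vertices; psum sums F over the paths satisfying Pr among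
    all vertex sequences with at most maxlen vertices (each exactly once). *)
Definition maxlen : nat := (2 * #|T| ^ 2).+1.

Definition psum (Pr : pred (seq T)) (F : seq T -> R) : R :=
  \sum_(k < maxlen) \sum_(t : (k.+1).-tuple T | Pr (tval t)) F (tval t).

(** (M,M')-flow: f : P -> [0,1] (values outside P are irrelevant). *)
Definition is_flow P P' pi' f :=
  (forall g, in_P P P' g -> 0 <= f g <= 1) /\
  (forall x y, edge P' x y -> psum (in_Pxy P P' x y) f = pi' x * P' x y).

Definition Acong P P' pi f z w : R :=
  (pi z * P z w)^-1 *
  psum (fun g => in_P P P' g && ((z, w) \in steps g))
       (fun g => (r_occ (z, w) g)%:R * (plen g)%:R * f g).

(** A(f) = max over E*(M) (all A_{z,w} are >= 0) *)
Definition Amax P P' pi f : R :=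
  \big[Num.max/0]_(e : T * T | edge P e.1 e.2) Acong P P' pi f e.1 e.2.

Definition Bcong P P' pi f z : R :=
  (pi z)^-1 * psum (fun g => in_P P P' g && (z \in g)) (fun g => (plen g)%:R * f g).

Definition Bmax P P' pi f : R := \big[Num.max/0]_(z : T) Bcong P P' pi f z.

Definition revP P pi (w x : T) : R := pi x * P x w / pi w.

Definition overlap P pi (z w : T) : R := \sum_x Num.min (P z x) (revP P pi w x).

(** kappa(f) < oo : no reciprocal 1/0 occurs in the max defining kappa(f). *)
Definition kappa_finite P P' pi f :=
  forall z w, edge P z w -> 0 < Acong P P' pi f z w -> 0 < overlap P pi z w.

(** kappa(f), meaningful (real) when kappa_finite holds *)
Definition kappa P P' pi f : R :=
  \big[Num.max/0]_(e : T * T | edge P e.1 e.2 && (0 < Acong P P' pi f e.1 e.2))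
     (overlap P pi e.1 e.2)^-1.

End Markov.

From HB Require Import structures.
From mathcomp Require Import all_boot all_order all_algebra.
From mathcomp Require Import zify ring lra.
Import Order.TTheory GRing.Theory Num.Theory.
Set Implicit Arguments. Unset Strict Implicit. Unset Printing Implicit Defensive.

(* Every path [t] of [f] is rerouted at random.  Its loops are erased, giving a
   simple path [s]; then, independently for every edge [zw] of [s], a vertex [x]
   is drawn with probability proportional to [min (P z x) (R(P) w x)], and [zw]
   is replaced by the two steps [z x w] (it is kept if [x] is [z] or [w]);
   finally loops are erased again.  The mass [f t] is split among the outcomes,
   which are again paths from the start to the end of [t], so [f'] is a flow.
   A rerouted path is simple and has at most [2 |t|] edges.  One of its edges
   [ab] comes from an edge of [s] leaving [a] and detoured through [b], or
   entering [b] and detoured through [a]; [s] has at most one edge of each kind,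
   and these detours have probabilities at most [kappa P(a,b)] and
   [kappa R(P)(b,a) = kappa pi(a) P(a,b) / pi(b)].  Summing over the paths of [f]
   through [a] and through [b] gives [A_ab(f') <= 2 kappa (B_a(f) + B_b(f))]. *)

Section Steps.
Variable T : finType.
Implicit Types (s t : seq T) (x y z w : T).

Lemma steps_cons x s :
  steps (x :: s) = if s is y :: _ then (x, y) :: steps s else [::].
Proof. by case: s. Qed.

Lemma unzip1_steps x s : unzip1 (steps (x :: s)) = belast x s.
Proof. by elim: s x => //= y s IH x; rewrite IH. Qed.

Lemma unzip2_steps x s : unzip2 (steps (x :: s)) = s.
Proof. exact: unzip2_zip. Qed.

Lemma mem_steps_fst s e : e \in steps s -> e.1 \in s.
Proof.
case: s => // x s /(map_f fst); rewrite -[map _ _]/(unzip1 _) unzip1_steps => he.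
by rewrite lastI mem_rcons inE he orbT.
Qed.

Lemma mem_steps_snd s e : e \in steps s -> e.2 \in s.
Proof.
case: s => // x s /(map_f snd); rewrite -[map _ _]/(unzip2 _) unzip2_steps => he.
by rewrite inE he orbT.
Qed.

Lemma uniq_unzip1_steps s : uniq s -> uniq (unzip1 (steps s)).
Proof.
by case: s => // x s; rewrite unzip1_steps lastI rcons_uniq => /andP[].
Qed.

Lemma uniq_unzip2_steps s : uniq s -> uniq (unzip2 (steps s)).
Proof. by case: s => // x s; rewrite unzip2_steps => /andP[]. Qed.

Lemma uniq_steps s : uniq s -> uniq (steps s).
Proof. exact: zip_uniql. Qed.

Lemma steps_succ_uniq s z w w' : uniq s ->
  (z, w) \in steps s -> (z, w') \in steps s -> w = w'.
Proof.
elim: s => // x s IH; rewrite steps_cons; case: s IH => // y s IH /andP[xNs us].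
rewrite !inE => /orP[/eqP[-> ->] | h] /orP[/eqP h' | h'].
- by case: h'.
- by move: xNs; rewrite (mem_steps_fst h').
- by case: h' => exz _; move: xNs; rewrite -exz (mem_steps_fst h).
- exact: IH.
Qed.

Lemma count_steps_fst s t a : uniq s -> {subset s <= t} ->
  (count (fun e => e.1 == a) (steps s) <= (a \in t))%N.
Proof.
move=> us st; rewrite -(count_map fst (pred1 a)) count_uniq_mem ?uniq_unzip1_steps //.
by case: mapP => // -[e /mem_steps_fst/st e1t ->]; rewrite e1t.
Qed.

Lemma count_steps_snd s t b : uniq s -> {subset s <= t} ->
  (count (fun e => e.2 == b) (steps s) <= (b \in t))%N.
Proof.
move=> us st; rewrite -(count_map snd (pred1 b)) count_uniq_mem ?uniq_unzip2_steps //.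
by case: mapP => // -[e /mem_steps_snd/st e2t ->]; rewrite e2t.
Qed.

End Steps.

Section LoopErasure.
Variable T : finType.
Implicit Types (s : seq T) (x y : T).

Fixpoint loop_erase s :=
  if s is x :: s' then
    let r := loop_erase s' in if x \in r then drop (index x r) r else x :: r
  else [::].

Lemma drop_index_mem x s : x \in s -> drop (index x s) s = x :: drop (index x s).+1 s.
Proof. by move=> xs; rewrite (drop_nth x) ?index_mem ?nth_index. Qed.

Lemma loop_erase_eq0 s : (loop_erase s == [::]) = (s == [::]).
Proof. by case: s => //= x s; case: ifP => // /drop_index_mem ->. Qed.

Lemma head_loop_erase s y : head y (loop_erase s) = head y s.
Proof. by case: s => //= x s; case: ifP => // /drop_index_mem ->. Qed.

Lemma last_drop s n y : (n < size s)%N -> last y (drop n s) = last y s.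
Proof.
elim: s y n => // x s IH y [|n] //= ltns.
by rewrite IH //; case: s {IH} ltns.
Qed.

Lemma last_loop_erase s y : last y (loop_erase s) = last y s.
Proof.
elim: s y => // x s IH y /=; case: s IH => [|x' s] IH //=.
have lastE z : last z (loop_erase (x' :: s)) = last x' s.
  by rewrite IH; case: (s).
case: ifP => xr; last by rewrite /= lastE.
by rewrite last_drop ?index_mem // lastE.
Qed.

Lemma loop_erase_uniq s : uniq (loop_erase s).
Proof.
elim: s => //= x s IH; case: ifP => xr; first exact: drop_uniq.
by rewrite /= xr IH.
Qed.

Lemma mem_loop_erase s : {subset loop_erase s <= s}.
Proof.
elim: s => //= x s IH y; case: ifP => _.
  by move=> /mem_drop /IH; rewrite inE => ->; rewrite orbT.
by rewrite !inE => /orP[-> // | /IH ->]; rewrite orbT.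
Qed.

Lemma steps_drop s n : steps (drop n s) = drop n (steps s).
Proof.
elim: s n => [|x s IH] [|n]; rewrite ?drop0 //=.
by rewrite IH steps_cons; case: s {IH}.
Qed.

Lemma steps_loop_erase s : {subset steps (loop_erase s) <= steps s}.
Proof.
elim: s => //= x s IH e; rewrite (steps_cons x s); case: ifP => xr.
  rewrite steps_drop => /mem_drop /IH; case: (s) => // y s'.
  by rewrite inE => ->; rewrite orbT.
rewrite steps_cons; have := head_loop_erase s x; have := loop_erase_eq0 s.
case: (loop_erase s) IH => [|y r] IH //; case: s {xr} IH => // x' s IH _ /= eyx'; subst x'.
by rewrite !inE => /orP[-> // | /IH ->]; rewrite orbT.
Qed.

Lemma size_loop_erase s : (size (loop_erase s) <= size s)%N.
Proof.
elim: s => //= x s IH; case: ifP => _ //=.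
by rewrite size_drop (leq_trans (leq_subr _ _)) // ltnW.
Qed.

Lemma plen_loop_erase s : (plen (loop_erase s) <= plen s)%N.
Proof. by rewrite /plen -!subn1 leq_sub2r ?size_loop_erase. Qed.

End LoopErasure.

Section Detour.
Variables (T : finType) (u : T -> T).
Implicit Types (s : seq T) (x y z w : T).

Fixpoint detour s :=
  if s is z :: s' then
    if s' is w :: _ then
      if u z \in [:: z; w] then z :: detour s' else z :: u z :: detour s'
    else [:: z]
  else [::].

Definition detour_step (e ab : T * T) : bool :=
  if u e.1 \in [:: e.1; e.2] then ab == e
  else (ab == (e.1, u e.1)) || (ab == (u e.1, e.2)).

Lemma detour_cons2 z w s : detour [:: z, w & s] =
  if u z \in [:: z; w] then z :: detour (w :: s) else [:: z, u z & detour (w :: s)].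
Proof. by []. Qed.

Lemma detour_cons x s : exists r, detour (x :: s) = x :: r.
Proof. by case: s => [|y s] /=; [exists [::] | case: ifP => _; eexists]. Qed.

Lemma head_detour s y : head y (detour s) = head y s.
Proof. by case: s => [|x [|w s]] //=; case: ifP. Qed.

Lemma last_detour s y : last y (detour s) = last y s.
Proof.
elim: s y => // x s IH y; case: s IH => // w s IH /=.
by case: ifP => _ /=; rewrite IH.
Qed.

Lemma plen_detour s : (plen (detour s) <= 2 * plen s)%N.
Proof.
rewrite /plen; elim: s => // x s IH; case: s IH => // w s IH.
have [r hr] := detour_cons w s; rewrite detour_cons2 hr /= in IH *.
by case: ifP => _ /=; lia.
Qed.

Lemma steps_detour s ab : ab \in steps (detour s) ->
  exists2 e, e \in steps s & detour_step e ab.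
Proof.
elim: s => // x s IH; case: s IH => // w s IH.
have [r hr] := detour_cons w s.
have step_xw : (x, w) \in steps [:: x, w & s] by rewrite inE eqxx.
have tail_steps e : e \in steps (w :: s) -> e \in steps [:: x, w & s].
  by move=> he; rewrite steps_cons inE he orbT.
rewrite detour_cons2 hr; case: ifP => hu; rewrite steps_cons.
  rewrite inE => /orP[/eqP-> | ]; first by exists (x, w); rewrite // /detour_step hu.
  by rewrite -hr => /IH[e he hstep]; exists e; first exact: tail_steps.
rewrite steps_cons !inE => /orP[hab | /orP[hab | ]].
- by exists (x, w); rewrite // /detour_step hu /= hab.
- by exists (x, w); rewrite // /detour_step hu /= hab orbT.
- by rewrite -hr => /IH[e he hstep]; exists e; first exact: tail_steps.
Qed.

Lemma detour_step_ends e a b : detour_step e (a, b) ->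
  ((e.1 == a) && (u e.1 == b)) || ((u e.1 == a) && (e.2 == b)).
Proof.
rewrite /detour_step; case: ifP => [|_].
  by rewrite !inE => /orP[] /eqP-> /eqP<- /=; rewrite !eqxx ?orbT.
by case/orP => /eqP[<- <-]; rewrite !eqxx ?orbT.
Qed.

End Detour.

Local Open Scope ring_scope.

Lemma sum_delta (R : pzSemiRingType) (I : finType) (j : I) :
  \sum_i ((i == j)%:R : R) = 1.
Proof. by rewrite (bigD1 j) //= eqxx big1 ?addr0 // => i /negbTE ->. Qed.

Lemma sum_natr_count (R : numDomainType) (A : eqType) (l : seq A) (p : pred A) :
  \sum_(e <- l) ((p e)%:R : R) = (count p l)%:R.
Proof. by elim: l => [|e l IH]; rewrite ?big_nil // big_cons IH natrD. Qed.

Lemma le1_sum1 (R : numDomainType) (I : finType) (F : I -> R) j :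
  (forall i, 0 <= F i) -> \sum_i F i = 1 -> F j <= 1.
Proof. by move=> F_ge0 <-; rewrite (bigD1 j) //= lerDl sumr_ge0. Qed.

Section PathSums.
Variables (R : realFieldType) (T : finType).
Implicit Types (Pr Q : pred (seq T)) (F G : seq T -> R) (s : seq T).

Definition in_psum_range s := (0 < size s <= maxlen T)%N.

Lemma ler_psum Pr F G :
  (forall g, Pr g -> in_psum_range g -> F g <= G g) -> psum Pr F <= psum Pr G.
Proof.
move=> FG; apply: ler_sum => k _; apply: ler_sum => t Pt.
by apply: FG; rewrite // /in_psum_range size_tuple ltn_ord.
Qed.

Lemma eq_psumr Pr F G :
  (forall g, Pr g -> in_psum_range g -> F g = G g) -> psum Pr F = psum Pr G.
Proof.
move=> FG; apply: eq_bigr => k _; apply: eq_bigr => t Pt.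
by apply: FG; rewrite // /in_psum_range size_tuple ltn_ord.
Qed.

Lemma eq_psuml Pr Q F : Pr =1 Q -> psum Pr F = psum Q F.
Proof. by move=> PQ; apply: eq_bigr => k _; apply: eq_bigl => t; rewrite PQ. Qed.

Lemma psum_indicator Pr Q F :
  psum Pr (fun g => (Q g)%:R * F g) = psum (predI Pr Q) F.
Proof.
apply: eq_bigr => k _; rewrite big_mkcond [RHS]big_mkcond.
by apply: eq_bigr => t _ /=; case: (Pr _); case: (Q _); rewrite ?mul1r ?mul0r.
Qed.

Lemma psum_ge0 Pr F : (forall g, Pr g -> 0 <= F g) -> 0 <= psum Pr F.
Proof. by move=> F0; apply: sumr_ge0 => k _; apply: sumr_ge0 => t /F0. Qed.

Lemma mulr_psumr Pr F c : c * psum Pr F = psum Pr (fun g => c * F g).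
Proof. by rewrite /psum mulr_sumr; apply: eq_bigr => k _; rewrite mulr_sumr. Qed.

Lemma psum_split Pr F G : psum Pr (fun g => F g + G g) = psum Pr F + psum Pr G.
Proof. by rewrite /psum -big_split; apply: eq_bigr => k _; rewrite -big_split. Qed.

Lemma exchange_psum_sum (U : finType) Pr (F : U -> seq T -> R) :
  psum Pr (fun g => \sum_u F u g) = \sum_u psum Pr (F u).
Proof. by rewrite /psum exchange_big; apply: eq_bigr => k _; rewrite exchange_big. Qed.

Lemma exchange_psum Pr Q (H : seq T -> seq T -> R) :
  psum Pr (fun g => psum Q (H ^~ g)) = psum Q (fun t => psum Pr (H t)).
Proof.
rewrite /psum; under eq_bigr do rewrite exchange_big.
rewrite exchange_big; apply: eq_bigr => j _; rewrite exchange_big.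
by apply: eq_bigr => s _; rewrite exchange_big.
Qed.

Lemma psum_delta Pr (H : seq T -> R) s : in_psum_range s ->
  psum Pr (fun g => H g * (s == g)%:R) = (Pr s)%:R * H s.
Proof.
case/andP=> s_gt0 s_le.
have ltsm : ((size s).-1 < maxlen T)%N by rewrite prednK.
have hs : size s == ((size s).-1).+1 by rewrite prednK.
rewrite /psum (bigD1 (Ordinal ltsm)) //= [X in _ + X]big1 ?addr0; last first.
  move=> k /eqP nek; apply: big1 => t _; case: eqP => [est|]; last by rewrite mulr0.
  by case: nek; apply: val_inj; rewrite /= est size_tuple.
pose ts : (((size s).-1).+1).-tuple T := Tuple hs.
have eq_ts (t : (((size s).-1).+1).-tuple T) : (s == t) = (t == ts).
  by rewrite eq_sym -val_eqE.
under eq_bigr do rewrite eq_ts.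
case Ps: (Pr s); last first.
  by rewrite big1 ?mul0r // => t Pt; case: eqP Pt => [-> /=|]; rewrite ?Ps ?mulr0.
rewrite (bigD1 ts) //= eqxx mulr1 big1 ?addr0 ?mul1r // => t /andP[_ /negbTE->].
by rewrite mulr0.
Qed.

Lemma ler_psum_term Pr F s : in_psum_range s -> Pr s ->
  (forall g, Pr g -> 0 <= F g) -> F s <= psum Pr F.
Proof.
move=> hs Ps F0; have := psum_delta Pr F hs; rewrite Ps mul1r => <-.
by apply: ler_psum => g Pg _; case: eqP => _; rewrite ?mulr1 ?mulr0 ?F0.
Qed.

End PathSums.

Section ProductLaw.
Variables (R : comPzSemiRingType) (I J : finType) (g : I -> J -> R).
Hypothesis g_sum1 : forall i, \sum_j g i j = 1.

Lemma sum_ffun_prod1 : \sum_(u : {ffun I -> J}) \prod_i g i (u i) = 1.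
Proof. by rewrite -bigA_distr_bigA big1. Qed.

Lemma sum_ffun_prod_marginal i0 j0 :
  \sum_(u : {ffun I -> J}) (\prod_i g i (u i)) * (u i0 == j0)%:R = g i0 j0.
Proof.
pose g' i j := g i j * (if i == i0 then (j == j0)%:R else 1).
transitivity (\sum_(u : {ffun I -> J}) \prod_i g' i (u i)).
  apply: eq_bigr => u _; rewrite big_split /=; congr (_ * _).
  by rewrite (bigD1 i0) //= eqxx big1 ?mulr1 // => i /negbTE ->.
rewrite -bigA_distr_bigA (bigD1 i0) //= [X in _ * X]big1 ?mulr1.
  rewrite /g' (bigD1 j0) //= !eqxx mulr1 big1 ?addr0 // => j /negbTE ->.
  by rewrite mulr0.
by move=> i /negbTE i_neq; under eq_bigr do rewrite /g' i_neq mulr1.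
Qed.

End ProductLaw.

Section Stationary.
Variables (R : realFieldType) (T : finType) (P : T -> T -> R) (pi : T -> R).

Lemma mpow_ge0 t x y : (forall x y, 0 <= P x y) -> 0 <= mpow P t x y.
Proof.
move=> P_ge0; elim: t x y => [|t IH] x y /=; first by rewrite ler0n.
by apply: sumr_ge0 => z _; rewrite mulr_ge0.
Qed.

Lemma stationary_mpow t z : stationary P pi -> pi z = \sum_x pi x * mpow P t x z.
Proof.
case=> _ _ piP; elim: t z => [|t IH] z /=.
  rewrite (bigD1 z) //= eqxx mulr1 big1 ?addr0 // => x /negbTE.
  by rewrite eq_sym => ->; rewrite mulr0.
rewrite -piP; under eq_bigr do rewrite mulr_sumr.
rewrite exchange_big /=; apply: eq_bigr => y _.
by rewrite IH mulr_suml; apply: eq_bigr => x _; rewrite mulrA.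
Qed.

Lemma stationary_gt0 : irreducible P -> (forall x y, 0 <= P x y) ->
  stationary P pi -> forall z, 0 < pi z.
Proof.
move=> irrP P_ge0 stat z; have [pi_ge0 pi_sum1 _] := stat.
have [x pi_x] : exists x, 0 < pi x.
  apply/existsP; apply: contraT; rewrite negb_exists => /forallP pi_le0.
  suff : \sum_x pi x <= 0 by rewrite pi_sum1 ler10.
  by apply: sumr_le0 => x _; rewrite leNgt pi_le0.
have [t Ptxz] := irrP x z.
rewrite (stationary_mpow t z stat) (bigD1 x) //= ltr_wpDr ?mulr_gt0 //.
by apply: sumr_ge0 => y _; rewrite mulr_ge0 ?mpow_ge0.
Qed.

End Stationary.

Section Rerouting.
Variables (R : realFieldType) (T : finType) (P P' : T -> T -> R) (pi : T -> R).
Hypotheses (P_ge0 : forall x y, 0 <= P x y) (pi_ge0 : forall x, 0 <= pi x).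
Implicit Types (s t g : seq T) (u : {ffun T -> T}) (x y z w : T).

Lemma revP_ge0 w x : 0 <= revP P pi w x.
Proof. by rewrite /revP divr_ge0 ?mulr_ge0. Qed.

(* With vanishing overlap, the point mass at [z]: the edge is not detoured. *)
Definition detour_law z w x : R :=
  if 0 < overlap P pi z w then Num.min (P z x) (revP P pi w x) / overlap P pi z w
  else (x == z)%:R.

Lemma detour_law_ge0 z w x : 0 <= detour_law z w x.
Proof.
rewrite /detour_law; case: ifP => [ov_gt0|_]; last exact: ler0n.
by rewrite divr_ge0 ?le_min ?P_ge0 ?revP_ge0 ?ltW.
Qed.

Lemma sum_detour_law z w : \sum_x detour_law z w x = 1.
Proof.
have [ov_gt0|ov_le0] := boolP (0 < overlap P pi z w).
  by under eq_bigr do rewrite /detour_law ov_gt0; rewrite -mulr_suml mulfV ?gt_eqF.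
by under eq_bigr do rewrite /detour_law (negbTE ov_le0); apply: sum_delta.
Qed.

Lemma detour_law_support z w x : x \notin [:: z; w] -> detour_law z w x != 0 ->
  edge P z x && edge P x w.
Proof.
rewrite /detour_law !inE negb_or => /andP[xNz _]; case: ifP => _; last first.
  by rewrite (negbTE xNz) eqxx.
rewrite mulf_eq0 negb_or => /andP[min_neq0 _].
have : 0 < Num.min (P z x) (revP P pi w x).
  by rewrite lt_def min_neq0 le_min P_ge0 revP_ge0.
rewrite lt_min /edge => /andP[-> rev_gt0] /=; rewrite lt_def P_ge0 andbT.
by apply: contraTneq rev_gt0; rewrite /revP => ->; rewrite mulr0 mul0r ltxx.
Qed.

Definition detour_weight s z x : R :=
  if [pick w | (z, w) \in steps s] is Some w then detour_law z w x else (x == z)%:R.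

Lemma detour_weight_ge0 s z x : 0 <= detour_weight s z x.
Proof. by rewrite /detour_weight; case: pickP => [w _|_]; rewrite ?detour_law_ge0. Qed.

Lemma sum_detour_weight s z : \sum_x detour_weight s z x = 1.
Proof.
rewrite /detour_weight; case: pickP => [w _|_]; [exact: sum_detour_law | exact: sum_delta].
Qed.

Lemma detour_weight_step s z w x : uniq s -> (z, w) \in steps s ->
  detour_weight s z x = detour_law z w x.
Proof.
move=> us zw_s; rewrite /detour_weight; case: pickP => [w' zw'_s|/(_ w)]; last by rewrite zw_s.
by rewrite (steps_succ_uniq us zw'_s zw_s).
Qed.

Definition reroute_prob t u : R := \prod_z detour_weight (loop_erase t) z (u z).

Definition reroute t u : seq T := loop_erase (detour u (loop_erase t)).

Lemma reroute_prob_ge0 t u : 0 <= reroute_prob t u.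
Proof. by apply: prodr_ge0 => z _; apply: detour_weight_ge0. Qed.

Lemma sum_reroute_prob t : \sum_u reroute_prob t u = 1.
Proof. exact: sum_ffun_prod1 (sum_detour_weight _). Qed.

Lemma reroute_prob_marginal t z x :
  \sum_u reroute_prob t u * (u z == x)%:R = detour_weight (loop_erase t) z x.
Proof. exact: sum_ffun_prod_marginal (sum_detour_weight _) z x. Qed.

Lemma reroute_uniq t u : uniq (reroute t u).
Proof. exact: loop_erase_uniq. Qed.

Lemma reroute_eq0 t u : (reroute t u == [::]) = (t == [::]).
Proof.
rewrite /reroute !loop_erase_eq0 -(loop_erase_eq0 t).
by case: (loop_erase t) => // x s; have [r ->] := detour_cons u x s.
Qed.

Lemma head_reroute t u y : head y (reroute t u) = head y t.
Proof. by rewrite /reroute head_loop_erase head_detour head_loop_erase. Qed.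

Lemma last_reroute t u y : last y (reroute t u) = last y t.
Proof. by rewrite /reroute last_loop_erase last_detour last_loop_erase. Qed.

Lemma reroute_in_range t u : t != [::] -> in_psum_range (reroute t u).
Proof.
move=> tn; rewrite /in_psum_range lt0n size_eq0 reroute_eq0 tn /=.
rewrite -(card_uniqP (reroute_uniq t u)) (leq_trans (max_card _)) // /maxlen.
by rewrite expnS expn1; nia.
Qed.

Lemma r_occ_reroute t u e : (r_occ e (reroute t u) <= 1)%N.
Proof. by rewrite /r_occ count_uniq_mem ?uniq_steps ?reroute_uniq ?leq_b1. Qed.

Lemma plen_reroute t u : (plen (reroute t u) <= 2 * plen t)%N.
Proof.
apply: leq_trans (plen_loop_erase _) _; apply: leq_trans (plen_detour _ _) _.
by rewrite leq_mul2l plen_loop_erase orbT.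
Qed.

Lemma detour_hit_le u s a b :
  ((a, b) \in steps (detour u s))%:R <= \sum_(e <- steps s)
    (((e.1 == a) && (u e.1 == b))%:R + ((u e.1 == a) && (e.2 == b))%:R : R).
Proof.
have terms_ge0 : 0 <= \sum_(e <- steps s)
    (((e.1 == a) && (u e.1 == b))%:R + ((u e.1 == a) && (e.2 == b))%:R : R).
  by apply: sumr_ge0 => e _; rewrite addr_ge0.
case hit: ((a, b) \in _) => //; have [e e_s /detour_step_ends ends] := steps_detour hit.
rewrite (big_rem e e_s) /= -[1%:R]addr0 lerD //; last first.
  by apply: sumr_ge0 => e' _; rewrite addr_ge0.
by case/orP: ends => ->; rewrite ?lerDl ?lerDr.
Qed.

(* Union bound over the edges [e] of the loop-erased path: a detour creates the
   edge [ab] only if [e] leaves [a] and is detoured via [b], or [e] enters [b]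
   and is detoured via [a]. *)
Lemma sum_prob_detour_hit_le t a b :
  \sum_u reroute_prob t u * ((a, b) \in steps (detour u (loop_erase t)))%:R <=
  \sum_(e <- steps (loop_erase t))
    ((e.1 == a)%:R * detour_weight (loop_erase t) e.1 b +
     (e.2 == b)%:R * detour_weight (loop_erase t) e.1 a).
Proof.
set s := loop_erase t.
apply: le_trans (ler_sum _ (fun u _ => ler_wpM2l (reroute_prob_ge0 t u)
  (detour_hit_le u s a b))) _.
rewrite le_eqVlt; apply/orP; left; apply/eqP.
under eq_bigr do rewrite mulr_sumr; rewrite exchange_big; apply: eq_bigr => e _.
rewrite -!reroute_prob_marginal !mulr_sumr -big_split; apply: eq_bigr => u _ /=.
by rewrite -!mulnb !natrM; ring.
Qed.

Lemma in_P_elim t : in_P P P' t ->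
  [/\ t != [::], all (fun e => edge P e.1 e.2) (steps t) &
      all (fun e => r_occ e t <= 2)%N (steps t)].
Proof. by case/existsP => x /existsP[y /andP[_ /and5P[tn _ _ ]]]. Qed.

Lemma reroute_edges t u : all (fun e => edge P e.1 e.2) (steps t) ->
  reroute_prob t u != 0 -> all (fun e => edge P e.1 e.2) (steps (reroute t u)).
Proof.
move=> /allP t_edges prob_neq0; apply/allP => -[a b] /steps_loop_erase.
case/steps_detour => -[z w] zw_s; rewrite /detour_step /=.
case: ifP => [_ /eqP[-> ->] | uzNzw]; first exact: t_edges (steps_loop_erase zw_s).
have : detour_law z w (u z) != 0.
  rewrite -(detour_weight_step _ (loop_erase_uniq t) zw_s).
  by apply: contraNneq prob_neq0 => w0; rewrite /reroute_prob (bigD1 z) //= w0 mul0r.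
by case/(detour_law_support (negbT uzNzw))/andP => ? ? /orP[] /eqP[-> ->].
Qed.

Lemma in_Pxy_reroute t u x y : in_P P P' t -> reroute_prob t u != 0 ->
  in_Pxy P P' x y (reroute t u) = in_Pxy P P' x y t.
Proof.
move=> /in_P_elim[tn t_edges t_occ] prob_neq0.
rewrite /in_Pxy /is_path_xy head_reroute last_reroute reroute_eq0 tn t_occ.
suff -> : all (fun e => r_occ e (reroute t u) <= 2)%N (steps (reroute t u)).
  by rewrite reroute_edges // t_edges.
by apply/allP => e _; apply: leq_trans (r_occ_reroute t u e) _.
Qed.

Lemma sum_reroute_in_Pxy t x y : in_P P P' t ->
  \sum_u reroute_prob t u * (in_Pxy P P' x y (reroute t u))%:R = (in_Pxy P P' x y t)%:R.
Proof.
move=> tP; rewrite -[RHS]mul1r -(sum_reroute_prob t) mulr_suml.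
apply: eq_bigr => u _; have [->|prob_neq0] := eqVneq (reroute_prob t u) 0.
  by rewrite !mul0r.
by rewrite in_Pxy_reroute.
Qed.

Variable f : seq T -> R.
Hypothesis f_ge0 : forall g, in_P P P' g -> 0 <= f g.

Definition rerouted_flow g : R :=
  psum (in_P P P') (fun t => \sum_u f t * reroute_prob t u * (reroute t u == g)%:R).

Lemma rerouted_flow_ge0 g : 0 <= rerouted_flow g.
Proof.
apply: psum_ge0 => t tP; apply: sumr_ge0 => u _.
by rewrite !mulr_ge0 ?f_ge0 ?reroute_prob_ge0 ?ler0n.
Qed.

Lemma psum_rerouted_flow (Pr : pred (seq T)) (H : seq T -> R) :
  psum Pr (fun g => H g * rerouted_flow g) =
  psum (in_P P P') (fun t =>
    \sum_u f t * reroute_prob t u * ((Pr (reroute t u))%:R * H (reroute t u))).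
Proof.
under eq_psumr do rewrite mulr_psumr.
rewrite exchange_psum; apply: eq_psumr => t /in_P_elim[tn _ _] _.
under eq_psumr do rewrite mulr_sumr.
rewrite exchange_psum_sum; apply: eq_bigr => u _.
under eq_psumr do rewrite mulrCA.
by rewrite -mulr_psumr psum_delta ?reroute_in_range // mulrA.
Qed.

Lemma in_Pxy_in_P x y g : in_Pxy P P' x y g -> in_P P P' g.
Proof. by move=> gxy; apply/existsP; exists x; apply/existsP; exists y. Qed.

Lemma psum_reroute_in_Pxy x y :
  psum (in_P P P') (fun t =>
    \sum_u f t * reroute_prob t u * (in_Pxy P P' x y (reroute t u))%:R)
  = psum (in_Pxy P P' x y) f.
Proof.
under eq_psumr => t tP _.
  rewrite -(eq_bigr _ (fun u _ => mulrA (f t) _ _)) -mulr_sumr sum_reroute_in_Pxy //.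
  over.
rewrite (eq_psumr (G := fun t => (in_Pxy P P' x y t)%:R * f t)) => [|t _ _]; last first.
  exact: mulrC.
rewrite psum_indicator; apply: eq_psuml => g /=.
by case gxy: (in_Pxy _ _ _ _ _); rewrite ?andbF // (in_Pxy_in_P gxy).
Qed.

Lemma rerouted_flow_Pxy x y :
  psum (in_Pxy P P' x y) rerouted_flow = psum (in_Pxy P P' x y) f.
Proof.
rewrite -psum_reroute_in_Pxy -[LHS](eq_psumr (F := fun g => 1 * rerouted_flow g)).
  by rewrite psum_rerouted_flow; under eq_psumr do under eq_bigr do rewrite mulr1.
by move=> g _ _; rewrite mul1r.
Qed.

Lemma rerouted_flow_le x y g : in_Pxy P P' x y g ->
  rerouted_flow g <= psum (in_Pxy P P' x y) f.
Proof.
move=> gxy; rewrite -psum_reroute_in_Pxy; apply: ler_psum => t tP _.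
apply: ler_sum => u _; apply: ler_wpM2l; first by rewrite mulr_ge0 ?f_ge0 ?reroute_prob_ge0.
by case: eqP => [->|_]; rewrite ?gxy ?lexx ?ler0n.
Qed.

End Rerouting.

Section Congestion.
Variables (R : realFieldType) (T : finType) (P P' : T -> T -> R) (pi : T -> R).
Variable f : seq T -> R.
Hypotheses (P_ge0 : forall x y, 0 <= P x y) (pi_gt0 : forall x, 0 < pi x).
Hypothesis f_ge0 : forall g, in_P P P' g -> 0 <= f g.
Hypothesis kappa_fin : kappa_finite P P' pi f.
Let pi_ge0 x : 0 <= pi x := ltW (pi_gt0 x).
Local Notation kappa := (kappa P P' pi f).
Implicit Types (s t g : seq T) (u : {ffun T -> T}) (a b x z w : T).

Lemma kappa_ge0 : 0 <= kappa.
Proof. exact: bigmax_ge_id. Qed.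

Lemma Acong_gt0 t a b : in_P P P' t -> in_psum_range t -> 0 < f t ->
  (a, b) \in steps t -> 0 < Acong P P' pi f a b.
Proof.
move=> tP t_range ft_gt0 ab_t; have [tn t_edges _] := in_P_elim tP.
have ab_edge : 0 < P a b by apply: (allP t_edges _ ab_t).
rewrite /Acong mulr_gt0 ?invr_gt0 ?mulr_gt0 //.
set F := fun g => (r_occ (a, b) g)%:R * (plen g)%:R * f g.
have Ft_gt0 : 0 < F t.
  rewrite /F !mulr_gt0 // ltr0n; last by case: t tn ab_t {t_range tP t_edges F ft_gt0} => [|x [|y s]].
  by rewrite -has_pred1 has_count in ab_t.
apply: lt_le_trans Ft_gt0 (ler_psum_term _ _ _); rewrite ?tP //.
by move=> g /andP[gP _]; rewrite !mulr_ge0 ?f_ge0.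
Qed.

Lemma overlap_kappa t z w : in_P P P' t -> in_psum_range t -> 0 < f t ->
  (z, w) \in steps t -> 0 < overlap P pi z w /\ (overlap P pi z w)^-1 <= kappa.
Proof.
move=> tP t_range ft_gt0 zw_t; have A_gt0 := Acong_gt0 tP t_range ft_gt0 zw_t.
have [_ t_edges _] := in_P_elim tP.
have zw_edge : edge P z w by apply: (allP t_edges _ zw_t).
split; first exact: kappa_fin.
by apply: (le_bigmax_cond _ (fun e => (overlap P pi e.1 e.2)^-1) (j := (z, w))); rewrite /= zw_edge.
Qed.

Local Notation prob := (reroute_prob P pi).

Lemma detour_weight_le t z w x : in_P P P' t -> in_psum_range t -> 0 < f t ->
  (z, w) \in steps (loop_erase t) ->
  detour_weight P pi (loop_erase t) z x <= kappa * Num.min (P z x) (revP P pi w x).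
Proof.
move=> tP t_range ft_gt0 zw_s.
have [ov_gt0 ov_kappa] := overlap_kappa tP t_range ft_gt0 (steps_loop_erase zw_s).
rewrite (detour_weight_step _ _ _ (loop_erase_uniq t) zw_s) /detour_law ov_gt0 mulrC.
by rewrite ler_wpM2r // le_min P_ge0 revP_ge0.
Qed.

Lemma reroute_hit_prob t a b : in_P P P' t -> in_psum_range t -> 0 < f t ->
  \sum_u prob t u * ((a, b) \in steps (detour u (loop_erase t)))%:R <=
  kappa * P a b * (a \in t)%:R + kappa * revP P pi b a * (b \in t)%:R.
Proof.
move=> tP t_range ft_gt0; apply: le_trans (sum_prob_detour_hit_le P_ge0 pi_ge0 t a b) _.
set s := loop_erase t.
have us : uniq s := loop_erase_uniq t.
have s_t : {subset s <= t} := @mem_loop_erase _ t.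
apply: (le_trans (y := \sum_(e <- steps s)
  ((e.1 == a)%:R * (kappa * P a b) + (e.2 == b)%:R * (kappa * revP P pi b a)))).
  rewrite big_seq_cond [X in _ <= X]big_seq_cond; apply: ler_sum => -[z w] /andP[zw_s _] /=.
  have wt_le x := detour_weight_le x tP t_range ft_gt0 zw_s.
  apply: lerD.
    have [<- | _] := eqVneq z a; last by rewrite !mul0r.
    by rewrite !mul1r (le_trans (wt_le b)) // ler_wpM2l ?kappa_ge0 // ge_min lexx.
  have [<- | _] := eqVneq w b; last by rewrite !mul0r.
  by rewrite !mul1r (le_trans (wt_le a)) // ler_wpM2l ?kappa_ge0 // ge_min lexx orbT.
rewrite big_split /= -!mulr_suml !sum_natr_count addrC [X in _ <= X]addrC.
apply: lerD; rewrite [X in _ <= X]mulrC ler_wpM2r ?ler_nat ?count_steps_fst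
  ?count_steps_snd //.
- exact: mulr_ge0 kappa_ge0 (revP_ge0 P_ge0 pi_ge0 b a).
- exact: mulr_ge0 kappa_ge0 (P_ge0 a b).
Qed.

Lemma rerouted_congestion_path t a b : in_P P P' t -> in_psum_range t ->
  \sum_u f t * prob t u *
    ((in_P P P' (reroute t u) && ((a, b) \in steps (reroute t u)))%:R *
     ((r_occ (a, b) (reroute t u))%:R * (plen (reroute t u))%:R))
  <= 2 * kappa * P a b * ((a \in t)%:R * ((plen t)%:R * f t)) +
     2 * kappa * revP P pi b a * ((b \in t)%:R * ((plen t)%:R * f t)).
Proof.
move=> tP t_range; have [ft0 | ft_neq0] := eqVneq (f t) 0.
  by rewrite ft0 big1 => [|u _]; rewrite ?mulr0 ?mul0r ?addr0.
have ft_gt0 : 0 < f t by rewrite lt_def ft_neq0 f_ge0.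
pose hit u : R := ((a, b) \in steps (detour u (loop_erase t)))%:R.
have term_le u :
  (in_P P P' (reroute t u) && ((a, b) \in steps (reroute t u)))%:R *
  ((r_occ (a, b) (reroute t u))%:R * (plen (reroute t u))%:R)
  <= (2 * plen t)%:R * hit u.
  rewrite /hit; case: andP => [[_ /steps_loop_erase ->] | _]; last by rewrite mul0r mulr_ge0 ?ler0n.
  rewrite mul1r mulr1 -natrM ler_nat.
  by have := leq_mul (r_occ_reroute t u (a, b)) (plen_reroute t u); rewrite mul1n.
have weight_ge0 u : 0 <= f t * prob t u.
  by rewrite mulr_ge0 ?f_ge0 ?(reroute_prob_ge0 P_ge0 pi_ge0).
apply: le_trans (ler_sum _ (fun u _ => ler_wpM2l (weight_ge0 u) (term_le u))) _.
have hit_le := reroute_hit_prob a b tP t_range ft_gt0.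
have factor_ge0 : 0 <= f t * (2 * plen t)%:R by rewrite mulr_ge0 ?ler0n ?f_ge0.
apply: (le_trans (y := f t * (2 * plen t)%:R * \sum_u prob t u * hit u)).
  rewrite mulr_sumr le_eqVlt; apply/orP; left; apply/eqP/eq_bigr => u _; ring.
apply: le_trans (ler_wpM2l factor_ge0 hit_le) _.
by rewrite le_eqVlt; apply/orP; left; apply/eqP; rewrite natrM; ring.
Qed.

Lemma psum_Bcong z :
  psum (fun g => in_P P P' g && (z \in g)) (fun g => (plen g)%:R * f g)
  = pi z * Bcong P P' pi f z.
Proof. by rewrite /Bcong mulrA mulfV ?mul1r // gt_eqF. Qed.

Lemma Acong_rerouted_le a b : edge P a b ->
  Acong P P' pi (rerouted_flow P P' pi f) a b <=
  2 * kappa * (Bcong P P' pi f a + Bcong P P' pi f b).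
Proof.
move=> ab_edge; rewrite /Acong (psum_rerouted_flow _ _ _ _
  (fun g => in_P P P' g && ((a, b) \in steps g))
  (fun g => (r_occ (a, b) g)%:R * (plen g)%:R)).
have := ler_psum (fun t tP t_range => rerouted_congestion_path a b tP t_range).
rewrite psum_split -!mulr_psumr !psum_indicator !psum_Bcong => paths_le.
have pa_gt0 : 0 < pi a * P a b by rewrite mulr_gt0.
apply: le_trans (ler_wpM2l _ paths_le) _; first by rewrite invr_ge0 ltW.
rewrite le_eqVlt; apply/orP; left; apply/eqP; rewrite /revP; field.
by rewrite !gt_eqF.
Qed.

End Congestion.

Theorem lemma27 (R : realFieldType) (T : finType) (P P' : T -> T -> R)
  (pi pi' : T -> R) (f : seq T -> R) :
  ergodic P -> ergodic P' -> stationary P pi -> stationary P' pi' ->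
  is_flow P P' pi' f -> kappa_finite P P' pi f ->
  exists f' : seq T -> R,
    is_flow P P' pi' f' /\
    Amax P P' pi f' <= 8 * kappa P P' pi f * Bmax P P' pi f.
Proof.
move=> [[P_ge0 _] irrP _] [[P'_ge0 P'_sum1] _ _] statP [pi'_ge0 pi'_sum1 _].
move=> [f_bounds f_flow] kappa_fin.
have pi_gt0 := stationary_gt0 irrP P_ge0 statP.
have pi_ge0 x : 0 <= pi x := ltW (pi_gt0 x).
have f_ge0 g (gP : in_P P P' g) : 0 <= f g by case/andP: (f_bounds g gP).
exists (rerouted_flow P P' pi f); split; first split.
- move=> g /[dup] gP /existsP[x /existsP[y gxy]].
  rewrite rerouted_flow_ge0 //=; apply: le_trans (rerouted_flow_le P_ge0 pi_ge0 f_ge0 gxy) _.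
  rewrite f_flow; last by case/andP: gxy.
  by rewrite mulr_ile1 ?le1_sum1.
- by move=> x y xy; rewrite (rerouted_flow_Pxy P' P_ge0 pi_ge0) f_flow.
have kappa_ge0 := kappa_ge0 P P' pi f.
have B_ge0 : 0 <= Bmax P P' pi f := bigmax_ge_id _ _ _ _.
have B_le z : Bcong P P' pi f z <= Bmax P P' pi f := le_bigmax _ _ z.
apply: bigmax_le => [|[a b] /= ab]; first by rewrite !mulr_ge0.
apply: le_trans (Acong_rerouted_le P_ge0 pi_gt0 f_ge0 kappa_fin ab) _.
have := B_le a; have := B_le b; nra.
Qed.
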